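(* Let $A,B,E,C$ define the stochastic system $X_{k+1}=AX_k+BU_k+EW_k$, $Y_k=CX_k$, with i.i.d. disturbances $W_k\in\mathcal L^2$ of known distribution, $(A,B)$ controllable, $(A,C)$ observable, and $T_{\mathrm{ini}}$ an integer not smaller than the lag of $(A,C)$. Assume it is equivalent to the VARX model $Y_k=\hat A\,Y_{[k-T_{\mathrm{ini}},k-1]}+\hat B\,U_{[k-T_{\mathrm{ini}},k-1]}+W_{k-1}$ with $\hat A\in\mathbb R^{n_y\times T_{\mathrm{ini}}n_y}$, $\hat B\in\mathbb R^{n_y\times T_{\mathrm{ini}}n_u}$, $W_k\in\mathcal L^2(\mathbb R^{n_y})$, and that the initial input-output trajectory $(U,Y)_{[1-T_{\mathrm{ini}},0]}$ is deterministic. Let $(u^{\mathrm{ud}},y^{\mathrm{ud}})_{[1-T_{\mathrm{ini}},T]}$ be real data with $y^{\mathrm{ud}}_k=\hat A\,y^{\mathrm{ud}}_{[k-T_{\mathrm{ini}},k-1]}+\hat B\,u^{\mathrm{ud}}_{[k-T_{\mathrm{ini}},k-1]}$ for all $k\in\mathbb I_{[1,T]}$, and let $N\in\mathbb N^+$ satisfy $\operatorname{rank}\begin{bmatrix}\mathcal H_{T_{\mathrm{ini}}+N}(u^{\mathrm{ud}}_{[1,T]})\\ \mathcal H_{T_{\mathrm{ini}}}(y^{\mathrm{ud}}_{[1,T-N]})\end{bmatrix}=(T_{\mathrm{ini}}+N)n_u+T_{\mathrm{ini}}n_y$. With the PCE notation of the context, fix $j\in\mathbb I_{[1,L-1]}$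 and write $k'=k'(j)$, $\bar N=N-k'$. Then real sequences $(\mathsf u^j,\mathsf y^j)_{[1,N]}$ form a trajectory of the $j$-th PCE coefficient dynamics, i.e. with $(\mathsf u^j,\mathsf y^j)_{[1-T_{\mathrm{ini}},0]}=0$, $$\mathsf y^j_k=\hat A\,\mathsf y^j_{[k-T_{\mathrm{ini}},k-1]}+\hat B\,\mathsf u^j_{[k-T_{\mathrm{ini}},k-1]}+\mathsf w^j_{k-1},\quad k\in\mathbb I_{[1,N]},$$ and the causality requirement $\mathsf u^j_k=0$ for $k\in\mathbb I_{[1,k']}$, if and only if there exists $\mathsf g^j\in\mathbb R^{T-N-T_{\mathrm{ini}}+1}$ such that $$(\mathsf u^j,\mathsf y^j)_{[1,k']}=0,\qquad \mathsf y^j_{k'+1}=\mathsf w^{I(j)},$$ $$\begin{bmatrix}\mathcal H_{T_{\mathrm{ini}}-1}(u^{\mathrm{ud}}_{[1,T-N-1]})\\ \mathcal H_{T_{\mathrm{ini}}-1}(y^{\mathrm{ud}}_{[1,T-N-1]})\\ \mathcal H_{\bar N}(u^{\mathrm{ud}}_{[T_{\mathrm{ini}},T-k'-1]})\\ \mathcal H_{\bar N}(y^{\mathrm{ud}}_{[T_{\mathrm{ini}},T-k'-1]})\end{bmatrix}\mathsf g^j=\begin{bmatrix}0_{(T_{\mathrm{ini}}-1)n_u\times1}\\ 0_{(T_{\mathrm{ini}}-1)n_y\times1}\\ \mathsf u^j_{[k'+1,N]}\\ \mathsf y^j_{[k'+1,N]}\end{bmatrix}.$$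
   Context: $\mathcal L^2(\mathbb R^n)$: $\mathbb R^n$-valued random variables with finite second moments. $\mathbb I_{[a,b]}=\{a,\dots,b\}$; $z_{[a,b]}=[z_a^\top,\dots,z_b^\top]^\top$. For $z_{[a,b]}$ with $z_k\in\mathbb R^n$ and $M\le b-a+1$, $\mathcal H_M(z_{[a,b]})$ is the $Mn\times(b-a-M+2)$ block Hankel matrix whose $(r,c)$ block is $z_{a+r+c-2}$. The lag of observable $(A,C)$ is the smallest $\ell$ with $[C^\top,\dots,(CA^{\ell-1})^\top]^\top$ of full column rank. PCE setup: each $W_k$ has an exact finite polynomial chaos expansion $W_k=\sum_{n=0}^{L_w-1}\mathsf w^n\psi^n(\xi_k)$ with $\mathsf w^n\in\mathbb R^{n_y}$, orthogonal polynomials $\psi^n$, $\psi^0=1$, and independent stochastic germs $\xi_k$ (same coefficients for all $k$). The joint basis $\{\phi^j\}_{j=0}^{L-1}$, $L=1+N(L_w-1)$, is $\phi^0=1$ and $\phi^{k(L_w-1)+n}=\psi^n(\xi_k)$ for $k\in\mathbb I_{[0,N-1]}$, $n\in\mathbb I_{[1,L_w-1]}$. Let $\mathcal I_k=\mathbb I_{[1+k(L_w-1),(k+1)(L_w-1)]}$; for $j\ge1$, $k'(j)$ is the $k$ with $j\in\mathcal I_k$, and $I(j)=j-k'(j)(L_w-1)$. The coefficients of $W_k$ in the joint basis are $\mathsf w^j_k=\mathbb E[W]$ if $j=0$, $\mathsf w^{I(j)}$ if $j\in\mathcal I_k$, and $0$ otherwise. The causality requirement stems from inputs/outputs at time $k$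 depending only on $W_0,\dots,W_{k-1}$. *)

From HB Require Import structures.
From mathcomp Require Import all_boot all_order all_algebra.
Set Implicit Arguments. Unset Strict Implicit. Unset Printing Implicit Defensive.
Import Order.TTheory GRing.Theory Num.Theory.
Local Open Scope ring_scope.

(* stack z a m = z_[a, a+m-1] = [z_a; z_(a+1); ...; z_(a+m-1)] : 'cV_(m*n) *)
Definition stack (R : nzRingType) (n : nat) (z : int -> 'cV[R]_n) (a : int) (m : nat)
  : 'cV[R]_(m * n) :=
  (mxvec (\matrix_(i < m, c < n) z (a + (i : nat)%:Z) c 0))^T.

(* hankel z a M q = H_M(z_[a,b]) with q = b - a - M + 2 columns:
   column c (0-based) is z_[a+c, a+c+M-1], i.e. block (r,c) (1-based) is
   z_(a+r+c-2). *)
Definition hankel (R : nzRingType) (n : nat) (z : int -> 'cV[R]_n) (a : int)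
  (M q : nat) : 'M[R]_(M * n, q) :=
  \matrix_(i < M * n, c < q) (stack z (a + (c : nat)%:Z) M) i 0.

(* PCE bookkeeping.  Lw = number of PCE terms of each W_k;
   joint basis index j >= 1 lies in I_k = [1 + k(Lw-1), (k+1)(Lw-1)]. *)
Definition kprime (Lw j : nat) : nat := (j.-1 %/ Lw.-1)%N.
Definition Iidx (Lw j : nat) : nat := (j - kprime Lw j * Lw.-1)%N.

(* Coefficient of W_k on the joint basis element phi^j:
   E[W] if j = 0, w^{I(j)} if j in I_k, 0 otherwise.
   wmean = E[W], wc n = w^n. *)
Definition wcoef (R : nzRingType) (ny Lw : nat) (wmean : 'cV[R]_ny)
  (wc : nat -> 'cV[R]_ny) (j : nat) (k : int) : 'cV[R]_ny :=
  if j == 0%N then wmean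
  else if k == (kprime Lw j)%:Z then wc (Iidx Lw j) else 0.

From HB Require Import structures.
From mathcomp Require Import all_boot all_order all_algebra zify.
Import Order.TTheory GRing.Theory Num.Theory.
Set Implicit Arguments. Unset Strict Implicit. Unset Printing Implicit Defensive.
Local Open Scope ring_scope.

(* The j-th coefficient dynamics is the VARX model driven by the single
   impulse w^{I(j)} at time k' = k'(j).  Since the initial trajectory is zero
   and the input vanishes up to k', so does the output, which then equals
   w^{I(j)} at k'+1; after that (u^j, y^j) is a noise-free VARX trajectory.
   By the rank condition, any input window of length T_ini + N together with
   the first T_ini outputs is matched by a combination g of time shifts of the
   data; such combinations are again trajectories, and a trajectory is
   determined by its inputs and its first T_ini outputs, so g reproduces the
   whole window.  Shifting time by k' + 1 - T_ini brings the window into the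
   Hankel form of the statement, whose first T_ini - 1 rows vanish by the zero
   prefix. *)

Lemma and3_iff_exists (P Q A : Prop) (T : Type) (B : T -> Prop) :
  (P -> (A <-> exists x, B x)) -> (P /\ Q /\ A <-> exists x, P /\ Q /\ B x).
Proof.
move=> iffAB; split=> [[p [q /(iffAB p) [x b]]] | [x [p [q b]]]]; first by exists x.
by do 2!split=> //; apply/(iffAB p); exists x.
Qed.

Definition shift (T : Type) (z : int -> T) (d : int) : int -> T := fun t => z (t + d).

Section Stack.
Variables (R : nzRingType) (n : nat).
Implicit Types (z : int -> 'cV[R]_n) (a d : int) (m : nat).

Lemma stackE z a m (r : 'I_m) (c : 'I_n) :
  stack z a m (mxvec_index r c) 0 = z (a + (r : nat)%:Z) c 0.
Proof. by rewrite /stack mxE mxvecE mxE. Qed.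

Lemma stack_eqP z z' a m :
  stack z a m = stack z' a m <-> forall t, a <= t < a + m%:Z -> z t = z' t.
Proof.
split=> [eq_zz' t /andP[le_at lt_tm] | eq_zz'].
  apply/matrixP => c k; rewrite (ord1 k).
  have lt_im : (absz (t - a) < m)%N by lia.
  move/matrixP/(_ (mxvec_index (Ordinal lt_im) c) 0): eq_zz'.
  by rewrite !stackE /= (_ : a + _ = t) //; lia.
apply/matrixP => i k; rewrite (ord1 k).
by case/mxvec_indexP: i => r c; rewrite !stackE eq_zz' //; have := ltn_ord r; lia.
Qed.

Lemma stack_cat_eqP z z' a m1 m2 :
  stack z a m1 = stack z' a m1 /\ stack z (a + m1%:Z) m2 = stack z' (a + m1%:Z) m2
  <-> forall t, a <= t < a + m1%:Z + m2%:Z -> z t = z' t.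
Proof.
rewrite !stack_eqP; split=> [[eq1 eq2] t ht | eq_zz'].
  by have [lt_t|ge_t] := ltP t (a + m1%:Z); [apply: eq1 | apply: eq2]; lia.
by split=> t ht; apply: eq_zz'; lia.
Qed.

Lemma stack_shift z d a m : stack (shift z d) a m = stack z (a + d) m.
Proof.
apply/matrixP => i k; rewrite (ord1 k).
by case/mxvec_indexP: i => r c; rewrite !stackE /shift addrAC.
Qed.

Lemma stack0 a m : stack (fun=> 0 : 'cV[R]_n) a m = 0.
Proof.
apply/matrixP => i k; rewrite (ord1 k).
by case/mxvec_indexP: i => r c; rewrite stackE !mxE.
Qed.

Lemma stack_eq0 z a m : (forall t, a <= t < a + m%:Z -> z t = 0) -> stack z a m = 0.
Proof. by move=> z0; rewrite -(stack0 a m); apply/stack_eqP. Qed.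

End Stack.

Section Hankel.
Variables (R : comNzRingType) (n q : nat).
Implicit Types (z : int -> 'cV[R]_n) (g : 'cV[R]_q).

Definition shift_comb z g (t : int) : 'cV[R]_n := \sum_(c < q) g c 0 *: z (t + (c : nat)%:Z).

Lemma hankel_mulmx z a M g : hankel z a M q *m g = stack (shift_comb z g) a M.
Proof.
apply/matrixP => i k; rewrite (ord1 k).
case/mxvec_indexP: i => r c; rewrite stackE /shift_comb !mxE summxE.
by apply: eq_bigr => d _; rewrite !mxE mxvecE mxE mulrC addrAC.
Qed.

Lemma stack_shift_comb z g a m :
  stack (shift_comb z g) a m = \sum_(c < q) g c 0 *: stack z (a + (c : nat)%:Z) m.
Proof.
apply/matrixP => i k; rewrite (ord1 k).
case/mxvec_indexP: i => r c; rewrite stackE /shift_comb !summxE.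
by apply: eq_bigr => d _; rewrite !mxE mxvecE mxE addrAC.
Qed.

End Hankel.

Section Varx.
Variables (R : comNzRingType) (nu ny Tini : nat).
Variables (Ahat : 'M[R]_(ny, Tini * ny)) (Bhat : 'M[R]_(ny, Tini * nu)).
Implicit Types (u : int -> 'cV[R]_nu) (y : int -> 'cV[R]_ny).

Definition varx_pred u y (k : int) : 'cV[R]_ny :=
  Ahat *m stack y (k - Tini%:Z) Tini + Bhat *m stack u (k - Tini%:Z) Tini.

Definition varx_on u y (a b : int) : Prop :=
  forall k, a <= k <= b -> y k = varx_pred u y k.

Lemma eq_varx_pred u y u' y' k :
  (forall t, k - Tini%:Z <= t < k -> u t = u' t /\ y t = y' t) ->
  varx_pred u y k = varx_pred u' y' k.
Proof.
move=> eq_uy; rewrite /varx_pred.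
have win t : k - Tini%:Z <= t < k - Tini%:Z + Tini%:Z -> k - Tini%:Z <= t < k by lia.
by congr (_ + _); congr (_ *m _); apply/stack_eqP => t /win /eq_uy [].
Qed.

Lemma varx_pred0 k : varx_pred (fun=> 0) (fun=> 0) k = 0.
Proof. by rewrite /varx_pred !stack0 !mulmx0 addr0. Qed.

Lemma varx_pred_shift u y d k :
  varx_pred (shift u d) (shift y d) k = varx_pred u y (k + d).
Proof. by rewrite /varx_pred !stack_shift addrAC. Qed.

Lemma varx_on_shift u y d a b a' b' :
  a' = a + d -> b' = b + d ->
  varx_on (shift u d) (shift y d) a b <-> varx_on u y a' b'.
Proof.
move=> -> ->; split=> varx k hk.
  by rewrite -[k](subrK d) -varx_pred_shift; apply: varx; lia.
by rewrite varx_pred_shift; apply: varx; lia.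
Qed.

Lemma varx_on_comb q u y (g : 'cV[R]_q) a b a' b' :
  a <= a' -> b' + q%:Z <= b + 1 -> varx_on u y a b ->
  varx_on (shift_comb u g) (shift_comb y g) a' b'.
Proof.
move=> le_a le_b varx k hk.
rewrite /varx_pred !stack_shift_comb !mulmx_sumr -big_split.
apply: eq_bigr => c _; rewrite varx; last by have := ltn_ord c; lia.
by rewrite scalerDr -!scalemxAr [k - _ + _]addrAC.
Qed.

Lemma varx_on_unique u y u' y' a b :
  varx_on u y (a + Tini%:Z) b -> varx_on u' y' (a + Tini%:Z) b ->
  (forall t, a <= t <= b -> u t = u' t) ->
  (forall t, a <= t < a + Tini%:Z -> y t = y' t) ->
  forall t, a <= t <= b -> y t = y' t.
Proof.
move=> varx varx' eq_u eq_y.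
suff eq_below s : forall t, a <= t <= b -> t < a + s%:Z -> y t = y' t.
  by move=> t ht; apply: (eq_below (absz (t - a + 1))); lia.
elim: s => [|s IHs] t ht lt_ts; first by lia.
have [lt_t|ge_t] := ltP t (a + s%:Z); first exact: IHs.
have [lt_tT|ge_tT] := ltP t (a + Tini%:Z); first by apply: eq_y; lia.
have t_varx : a + Tini%:Z <= t <= b by lia.
rewrite (varx t t_varx) (varx' t t_varx); apply: eq_varx_pred => r hr.
by split; [apply: eq_u | apply: IHs]; lia.
Qed.

Lemma varx_impulse_iff u y (e : int -> 'cV[R]_ny) (kp N : nat) :
  (kp < N)%N -> (forall k, k != kp%:Z -> e k = 0) ->
  (forall t, 1 - Tini%:Z <= t <= 0 -> u t = 0 /\ y t = 0) ->
  ((forall k, 1 <= k <= N%:Z -> y k = varx_pred u y k + e (k - 1)) /\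
   (forall k, 1 <= k <= kp%:Z -> u k = 0))
  <-> (forall k, 1 <= k <= kp%:Z -> u k = 0 /\ y k = 0) /\
      y (kp%:Z + 1) = e kp%:Z /\ varx_on u y (kp%:Z + 2) N%:Z.
Proof.
move=> lt_kpN e0 init.
have pred0 k : 1 <= k <= kp%:Z + 1 ->
    (forall t, 1 - Tini%:Z <= t <= kp%:Z -> u t = 0 /\ y t = 0) -> varx_pred u y k = 0.
  move=> hk zero; rewrite -(varx_pred0 k).
  by apply: eq_varx_pred => t ht; apply: zero; lia.
split=> [[varx_e u0] | [zero [y_kp1 varx]]].
  have zero_prefix t : 1 - Tini%:Z <= t <= kp%:Z -> u t = 0 /\ y t = 0.
    move=> ht; have u_zero s : 1 - Tini%:Z <= s <= kp%:Z -> u s = 0.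
      by move=> hs; have [s_le0|s_gt0] := lerP s 0; [apply: (proj1 (init s _)) | apply: u0]; lia.
    split; first exact: u_zero.
    apply: (varx_on_unique (u' := fun=> 0) (y' := fun=> 0) _ _ u_zero) => //.
    - by move=> k hk; rewrite varx_e ?e0 ?addr0 //; lia.
    - by move=> k _; rewrite varx_pred0.
    - by move=> s hs; apply: (proj2 (init s _)); lia.
  split; first by move=> k hk; apply: zero_prefix; lia.
  split; first by rewrite varx_e ?addrK ?pred0 ?add0r //; lia.
  by move=> k hk; rewrite varx_e ?e0 ?addr0 //; lia.
have zero_prefix t : 1 - Tini%:Z <= t <= kp%:Z -> u t = 0 /\ y t = 0.
  by move=> ht; have [t_le0|t_gt0] := lerP t 0; [apply: init | apply: zero]; lia.
split; last by move=> k /zero [].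
move=> k hk; have [le_k_kp|gt_k_kp] := lerP k kp%:Z.
  by rewrite (proj2 (zero_prefix k _)) ?pred0 ?e0 ?addr0 //; lia.
have [->|ne_k] := eqVneq k (kp%:Z + 1); first by rewrite y_kp1 pred0 ?addrK ?add0r //; lia.
by rewrite varx ?e0 ?addr0 //; lia.
Qed.

End Varx.

Section DataDriven.
Variables (R : fieldType) (nu ny Tini T N : nat).
Variables (Ahat : 'M[R]_(ny, Tini * ny)) (Bhat : 'M[R]_(ny, Tini * nu)).
Variables (uud : int -> 'cV[R]_nu) (yud : int -> 'cV[R]_ny).
Local Notation q := (T + 1 - Tini - N)%N.
Hypothesis Tini_gt0 : (0 < Tini)%N.
Hypothesis le_TiniN_T : (Tini + N <= T + 1)%N.
Hypothesis data_varx : varx_on Ahat Bhat uud yud 1 T%:Z.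
Hypothesis rank_data : \rank (col_mx (hankel uud 1 (Tini + N) q) (hankel yud 1 Tini q))
  = ((Tini + N) * nu + Tini * ny)%N.

Lemma varx_on_shift_combP (u : int -> 'cV[R]_nu) (y : int -> 'cV[R]_ny) (L : nat) :
  (L <= N.+1)%N ->
  varx_on Ahat Bhat u y (Tini%:Z + 1) (Tini%:Z + L%:Z - 1) <->
  exists g : 'cV[R]_q, forall t, 1 <= t < Tini%:Z + L%:Z ->
    shift_comb uud g t = u t /\ shift_comb yud g t = y t.
Proof.
move=> le_LN; split=> [varx | [g comb_eq]].
  have /row_freeP [B hB] : row_free (col_mx (hankel uud 1 (Tini + N) q) (hankel yud 1 Tini q)).
    by rewrite /row_free rank_data.
  pose g := B *m col_mx (stack u 1 (Tini + N)) (stack y 1 Tini).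
  have : col_mx (hankel uud 1 (Tini + N) q) (hankel yud 1 Tini q) *m g
      = col_mx (stack u 1 (Tini + N)) (stack y 1 Tini) by rewrite mulmxA hB mul1mx.
  rewrite mul_col_mx !hankel_mulmx => /eq_col_mx [/stack_eqP comb_u /stack_eqP comb_y].
  exists g => t ht; split; first by apply: comb_u; lia.
  have comb_varx : varx_on Ahat Bhat (shift_comb uud g) (shift_comb yud g)
      (1 + Tini%:Z) (Tini%:Z + L%:Z - 1).
    by apply: (varx_on_comb g _ _ data_varx); lia.
  apply: (varx_on_unique comb_varx) => [k hk | s hs | s hs | ];
    [apply: varx | apply: comb_u | apply: comb_y | idtac]; lia.
move=> k hk; rewrite -(proj2 (comb_eq k _)); last by lia.
rewrite (varx_on_comb g (a' := Tini%:Z + 1) (b' := Tini%:Z + L%:Z - 1) _ _ data_varx); [|lia..].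
by apply: eq_varx_pred => t ht; apply: comb_eq; lia.
Qed.

Lemma varx_on_hankelP (u : int -> 'cV[R]_nu) (y : int -> 'cV[R]_ny) (L : nat) :
  (L <= N.+1)%N ->
  varx_on Ahat Bhat u y (Tini%:Z + 1) (Tini%:Z + L%:Z - 1) <->
  exists g : 'cV[R]_q,
    col_mx (col_mx (hankel uud 1 Tini.-1 q) (hankel yud 1 Tini.-1 q))
           (col_mx (hankel uud Tini%:Z L q) (hankel yud Tini%:Z L q)) *m g
    = col_mx (col_mx (stack u 1 Tini.-1) (stack y 1 Tini.-1))
             (col_mx (stack u Tini%:Z L) (stack y Tini%:Z L)).
Proof.
move=> le_LN; rewrite varx_on_shift_combP //.
have Tini_split : Tini%:Z = 1 + Tini.-1%:Z by lia.
split=> -[g comb_eq]; exists g; move: comb_eq; rewrite !mul_col_mx !hankel_mulmx Tini_split.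
  move=> comb_eq.
  have /stack_cat_eqP [-> ->] : forall t, 1 <= t < 1 + Tini.-1%:Z + L%:Z ->
      shift_comb uud g t = u t by move=> t ht; apply: (proj1 (comb_eq t _)); lia.
  have /stack_cat_eqP [-> ->] // : forall t, 1 <= t < 1 + Tini.-1%:Z + L%:Z ->
      shift_comb yud g t = y t by move=> t ht; apply: (proj2 (comb_eq t _)); lia.
move=> /eq_col_mx [/eq_col_mx [u1 y1] /eq_col_mx [u2 y2]] t ht.
have /stack_cat_eqP comb_u := conj u1 u2; have /stack_cat_eqP comb_y := conj y1 y2.
by split; [apply: comb_u | apply: comb_y]; lia.
Qed.

End DataDriven.

Theorem lemma4 (R : realFieldType) (nu ny Tini T N Lw : nat)
  (Ahat : 'M[R]_(ny, Tini * ny)) (Bhat : 'M[R]_(ny, Tini * nu))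
  (uud : int -> 'cV[R]_nu) (yud : int -> 'cV[R]_ny)
  (wmean : 'cV[R]_ny) (wc : nat -> 'cV[R]_ny)
  (j : nat) (uj : int -> 'cV[R]_nu) (yj : int -> 'cV[R]_ny) :
  (1 <= Tini)%N ->
  (0 < N)%N ->
  (Tini + N <= T + 1)%N ->
  (* the data obey the (noise-free) VARX model on I_[1,T] *)
  (forall k : int, 1 <= k <= T%:Z ->
     yud k = Ahat *m stack yud (k - Tini%:Z) Tini
             + Bhat *m stack uud (k - Tini%:Z) Tini) ->
  (* persistency-of-excitation rank condition *)
  \rank (col_mx (hankel uud 1 (Tini + N) (T + 1 - Tini - N))
                (hankel yud 1 Tini (T + 1 - Tini - N)))
    = ((Tini + N) * nu + Tini * ny)%N ->
  (* j in I_[1, L-1] with L = 1 + N (Lw - 1) *)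
  (1 <= j <= N * Lw.-1)%N ->
  (* zero initial trajectory of the j-th PCE coefficients *)
  (forall k : int, 1 - Tini%:Z <= k <= 0 -> uj k = 0 /\ yj k = 0) ->
  let kp := kprime Lw j in
  let Nb := (N - kp)%N in
  let q := (T + 1 - Tini - N)%N in
  ((forall k : int, 1 <= k <= N%:Z ->
      yj k = Ahat *m stack yj (k - Tini%:Z) Tini
             + Bhat *m stack uj (k - Tini%:Z) Tini
             + wcoef Lw wmean wc j (k - 1)) /\
   (forall k : int, 1 <= k <= kp%:Z -> uj k = 0))
  <->
  (exists g : 'cV[R]_q,
     (forall k : int, 1 <= k <= kp%:Z -> uj k = 0 /\ yj k = 0) /\
     yj (kp%:Z + 1) = wc (Iidx Lw j) /\
     col_mx (col_mx (hankel uud 1 Tini.-1 q) (hankel yud 1 Tini.-1 q))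
            (col_mx (hankel uud Tini%:Z Nb q) (hankel yud Tini%:Z Nb q)) *m g
     = col_mx (col_mx 0 0)
              (col_mx (stack uj (kp%:Z + 1) Nb) (stack yj (kp%:Z + 1) Nb))).
Proof.
move=> Tini_gt0 _ le_TiniN_T data_varx rank_data /andP[j_gt0 le_j] init kp Nb q.
have lt_kpN : (kp < N)%N by rewrite /kp /kprime ltn_divLR; lia.
have j_ne0 : (j == 0)%N = false by lia.
have wcoef_off k : k != kp%:Z -> wcoef Lw wmean wc j k = 0.
  by move=> /negbTE k_ne; rewrite /wcoef j_ne0 k_ne.
have wcoef_kp : wcoef Lw wmean wc j kp%:Z = wc (Iidx Lw j) by rewrite /wcoef j_ne0 eqxx.
apply: (iff_trans (varx_impulse_iff Ahat Bhat lt_kpN wcoef_off init)); rewrite wcoef_kp.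
apply: and3_iff_exists => zero; pose d := kp%:Z + 1 - Tini%:Z.
have zero_past t : kp%:Z + 2 - Tini%:Z <= t <= kp%:Z -> uj t = 0 /\ yj t = 0.
  by move=> ht; have [t_le0|t_gt0] := lerP t 0; [apply: init | apply: zero]; lia.
rewrite -(varx_on_shift Ahat Bhat uj yj (d := d) (a := Tini%:Z + 1) (b := Tini%:Z + Nb%:Z - 1)); [|lia..].
rewrite /q (varx_on_hankelP Tini_gt0 le_TiniN_T data_varx rank_data); [|lia..].
rewrite !stack_shift (_ : Tini%:Z + d = kp%:Z + 1); last by lia.
rewrite (stack_eq0 (a := 1 + d) (z := uj)) ?(stack_eq0 (a := 1 + d) (z := yj)) // => t ht.
- by apply: (proj2 (zero_past t _)); lia.
- by apply: (proj1 (zero_past t _)); lia.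
Qed.
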